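(* On the surface of the unit cube, the shortest geodesic trajectory between two vertices that are opposite on a face is the face diagonal, of length $\sqrt2$, and among all other geodesic trajectories between two such vertices the minimal length is $\sqrt{10}$.
   Context: A geodesic trajectory between two vertices is a locally length-minimizing (straight in the flat metric) path on the cube surface joining them whose interior contains no vertex. *)

From Stdlib Require Import Reals Lra Lia.
Open Scope R_scope.

Definition pt : Type := (R * R * R)%type.

Definition coord (p : pt) (i : nat) : R :=
  match i with
  | O => fst (fst p)
  | S O => snd (fst p)
  | _ => snd p
  end.

Definition vsub (p q : pt) : pt :=
  (fst (fst p) - fst (fst q), snd (fst p) - snd (fst q), snd p - snd q).
Definition vadd (p q : pt) : pt :=
  (fst (fst p) + fst (fst q), snd (fst p) + snd (fst q), snd p + snd q).
Definition vscale (l : R) (p : pt) : pt :=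
  (l * fst (fst p), l * snd (fst p), l * snd p).
Definition dot (p q : pt) : R :=
  fst (fst p) * fst (fst q) + snd (fst p) * snd (fst q) + snd p * snd q.
Definition norm (p : pt) : R := sqrt (dot p p).
Definition pdist (p q : pt) : R := norm (vsub q p).

Definition in_cube (p : pt) : Prop :=
  forall i, (i < 3)%nat -> 0 <= coord p i <= 1.

Definition is_vertex (p : pt) : Prop :=
  forall i, (i < 3)%nat -> coord p i = 0 \/ coord p i = 1.

Definition is_face (i : nat) (b : R) : Prop := (i < 3)%nat /\ (b = 0 \/ b = 1).
Definition in_face (i : nat) (b : R) (p : pt) : Prop := in_cube p /\ coord p i = b.

Definition opposite_on_face (A B : pt) : Prop :=
  is_vertex A /\ is_vertex B /\
  exists i, (i < 3)%nat /\ coord A i = coord B i /\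
    forall j, (j < 3)%nat -> j <> i -> coord A j <> coord B j.

Definition on_segment (A B p : pt) : Prop :=
  exists t, 0 <= t <= 1 /\ p = vadd A (vscale t (vsub B A)).

(** Straightness (in the flat metric of the cube surface) at a breakpoint
    [p] between an incoming segment [a,p] and an outgoing segment [p,c].
    Either both segments lie in a common face and continue in the same
    direction, or they lie in two distinct (hence adjacent) faces meeting
    along the edge through [p], and the unfolding across that edge makes them
    collinear: the unit directions have the same component along the edge
    (the perpendicular components then automatically match, and point
    towards / away from the edge). *)
Definition straight_at (a p c : pt) : Prop :=
  exists i b i' b',
    is_face i b /\ is_face i' b' /\
    in_face i b a /\ in_face i b p /\ in_face i' b' p /\ in_face i' b' c /\
    ( (i = i' /\ b = b' /\
         exists l, 0 < l /\ vsub c p = vscale l (vsub p a))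
      \/
      (i <> i' /\
         forall j, (j < 3)%nat -> j <> i -> j <> i' ->
           coord (vsub p a) j / norm (vsub p a)
           = coord (vsub c p) j / norm (vsub c p)) ).

Definition geodesic_traj (A B : pt) (n : nat) (p : nat -> pt) : Prop :=
  (1 <= n)%nat /\ p O = A /\ p n = B /\
  (forall k, (k < n)%nat ->
     p k <> p (S k) /\
     exists i b, is_face i b /\ in_face i b (p k) /\ in_face i b (p (S k))) /\
  (forall k, (0 < k < n)%nat -> ~ is_vertex (p k)) /\
  (forall k t, (k < n)%nat -> 0 < t < 1 ->
     ~ is_vertex (vadd (p k) (vscale t (vsub (p (S k)) (p k))))) /\
  (forall k, (0 < k < n)%nat -> straight_at (p (pred k)) (p k) (p (S k))).

Fixpoint path_len (p : nat -> pt) (n : nat) : R :=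
  match n with
  | O => 0
  | S m => path_len p m + pdist (p m) (p (S m))
  end.

(** The path is not (a reparametrization of) the face diagonal [A,B]. *)
Definition leaves_segment (A B : pt) (n : nat) (p : nat -> pt) : Prop :=
  exists k, (k <= n)%nat /\ ~ on_segment A B (p k).

(* Unfold the faces met by a geodesic trajectory from A into the plane, one
   after the other across the edges it crosses.  The trajectory becomes a
   straight segment of the same length issued from the origin, and the chart
   of each face sends the vertices of the cube to points of Z^2, a vertex v
   landing on a point whose coordinate sum has the parity of
   coord_sum v + coord_sum A.  Hence B lands on (z1, z2) with z1 + z2 even, and
   the length is sqrt (z1^2 + z2^2).  No interior point of the segment is a
   lattice point, for it would come from a vertex inside the trajectory; the
   midpoint in particular is not, so z1 and z2 are odd.  A length below
   sqrt 10 thus forces |z1| = |z2| = 1, i.e. the length |AB| = sqrt 2, and only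
   the face diagonal has that length.  The value sqrt 10 is attained by a
   trajectory over three faces whose development has displacement (3, 1). *)

From Stdlib Require Import Reals Lra Lia ZArith.
Open Scope R_scope.

Lemma coord_vsub p q m : coord (vsub p q) m = coord p m - coord q m.
Proof. destruct m as [|[|m]]; reflexivity. Qed.

Lemma coord_vadd p q m : coord (vadd p q) m = coord p m + coord q m.
Proof. destruct m as [|[|m]]; reflexivity. Qed.

Lemma coord_vscale l p m : coord (vscale l p) m = l * coord p m.
Proof. destruct m as [|[|m]]; reflexivity. Qed.

Definition segpt (x y : pt) (t : R) : pt := vadd x (vscale t (vsub y x)).

Lemma coord_segpt x y t m :
  coord (segpt x y t) m = coord x m + t * (coord y m - coord x m).
Proof. unfold segpt; rewrite coord_vadd, coord_vscale, coord_vsub; reflexivity. Qed.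

Lemma pt_eq_coord x y :
  (forall m, (m < 3)%nat -> coord x m = coord y m) -> x = y.
Proof.
  intros H; destruct x as [[x0 x1] x2], y as [[y0 y1] y2].
  pose proof (H 0%nat ltac:(lia)); pose proof (H 1%nat ltac:(lia));
  pose proof (H 2%nat ltac:(lia)); simpl in *; subst; reflexivity.
Qed.

Lemma segpt0 x y : segpt x y 0 = x.
Proof. apply pt_eq_coord; intros m _; rewrite coord_segpt; ring. Qed.

Lemma segpt1 x y : segpt x y 1 = y.
Proof. apply pt_eq_coord; intros m _; rewrite coord_segpt; ring. Qed.

Definition perm3 (i j k : nat) : Prop :=
  (i < 3 /\ j < 3 /\ k < 3 /\ i <> j /\ i <> k /\ j <> k)%nat.

Lemma perm3_cases i j k m : perm3 i j k -> (m < 3)%nat -> m = i \/ m = j \/ m = k.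
Proof. unfold perm3; lia. Qed.

Lemma perm3_swap23 i j k : perm3 i j k -> perm3 i k j.
Proof. unfold perm3; lia. Qed.

Lemma perm3_complete i : (i < 3)%nat -> exists j k, perm3 i j k.
Proof.
  intros Hi; destruct i as [|[|[|i]]]; [exists 1%nat, 2%nat | exists 0%nat, 2%nat
    | exists 0%nat, 1%nat | ]; unfold perm3; lia.
Qed.

Ltac destruct_perm3 i j k :=
  destruct i as [|[|[|i]]], j as [|[|[|j]]], k as [|[|[|k]]]; unfold perm3 in *; try lia.

Lemma dot_perm3 i j k x y : perm3 i j k ->
  dot x y = coord x i * coord y i + coord x j * coord y j + coord x k * coord y k.
Proof.
  intros H; destruct x as [[x0 x1] x2], y as [[y0 y1] y2]; unfold dot.
  destruct_perm3 i j k; simpl; ring.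
Qed.

Definition coord_sum (x : pt) : R := coord x 0 + coord x 1 + coord x 2.

Lemma coord_sum_perm3 i j k x : perm3 i j k ->
  coord_sum x = coord x i + coord x j + coord x k.
Proof.
  intros H; destruct x as [[x0 x1] x2]; unfold coord_sum.
  destruct_perm3 i j k; simpl; ring.
Qed.

Definition pt_axes (i j : nat) (xi xj xk : R) : pt :=
  let f m := if Nat.eqb m i then xi else if Nat.eqb m j then xj else xk in
  (f 0%nat, f 1%nat, f 2%nat).

Lemma coord_pt_axes1 i j k xi xj xk : perm3 i j k -> coord (pt_axes i j xi xj xk) i = xi.
Proof. intros H; unfold pt_axes; destruct_perm3 i j k; reflexivity. Qed.

Lemma coord_pt_axes2 i j k xi xj xk : perm3 i j k -> coord (pt_axes i j xi xj xk) j = xj.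
Proof. intros H; unfold pt_axes; destruct_perm3 i j k; reflexivity. Qed.

Lemma coord_pt_axes3 i j k xi xj xk : perm3 i j k -> coord (pt_axes i j xi xj xk) k = xk.
Proof. intros H; unfold pt_axes; destruct_perm3 i j k; reflexivity. Qed.

Lemma dot_self_nonneg x : 0 <= dot x x.
Proof. destruct x as [[a b] c]; unfold dot; simpl; nra. Qed.

Lemma norm_nonneg x : 0 <= norm x.
Proof. apply sqrt_pos. Qed.

Lemma norm_mul_self x : norm x * norm x = dot x x.
Proof. apply sqrt_sqrt, dot_self_nonneg. Qed.

Lemma norm_perm3 i j k x : perm3 i j k ->
  norm x = sqrt (coord x i ^ 2 + coord x j ^ 2 + coord x k ^ 2).
Proof. intros H; unfold norm; rewrite (dot_perm3 i j k x x H); f_equal; ring. Qed.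

Lemma dot_self_eq0 x : dot x x = 0 -> forall m, coord x m = 0.
Proof.
  destruct x as [[a b] c]; unfold dot; simpl; intros H m.
  destruct m as [|[|m]]; simpl; nra.
Qed.

Lemma norm_vsub_pos x y : x <> y -> 0 < norm (vsub y x).
Proof.
  intros Hxy; destruct (norm_nonneg (vsub y x)) as [|H0]; [assumption|exfalso].
  apply Hxy, pt_eq_coord; intros m _.
  pose proof (norm_mul_self (vsub y x)) as E; rewrite <- H0, Rmult_0_l in E.
  pose proof (dot_self_eq0 _ (eq_sym E) m) as Em; rewrite coord_vsub in Em; lra.
Qed.

Lemma norm_scale l x : 0 <= l -> norm (vscale l x) = l * norm x.
Proof.
  intros Hl; unfold norm.
  replace (dot (vscale l x) (vscale l x)) with (l * l * dot x x)
    by (destruct x as [[a b] c]; unfold dot, vscale; simpl; ring).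
  rewrite sqrt_mult, sqrt_square by (nra || apply dot_self_nonneg); reflexivity.
Qed.

Lemma cauchy_schwarz x y : dot x y <= norm x * norm y.
Proof.
  assert (Hsq : dot x y ^ 2 <= (norm x * norm y) ^ 2).
  { replace ((norm x * norm y) ^ 2) with ((norm x * norm x) * (norm y * norm y)) by ring.
    rewrite !norm_mul_self.
    destruct x as [[a b] c], y as [[d e] f]; unfold dot; simpl.
    assert (L : (a*a + b*b + c*c) * (d*d + e*e + f*f) - (a*d + b*e + c*f) ^ 2
                = (a*e - b*d) ^ 2 + (a*f - c*d) ^ 2 + (b*f - c*e) ^ 2) by ring.
    pose proof (pow2_ge_0 (a*e - b*d)); pose proof (pow2_ge_0 (a*f - c*d));
    pose proof (pow2_ge_0 (b*f - c*e)); lra. }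
  pose proof (Rmult_le_pos _ _ (norm_nonneg x) (norm_nonneg y)); nra.
Qed.

Lemma norm_vadd_sq x y : norm (vadd x y) * norm (vadd x y)
  = norm x * norm x + norm y * norm y + 2 * dot x y.
Proof.
  rewrite !norm_mul_self; destruct x as [[a b] c], y as [[d e] f]; unfold dot, vadd; simpl; ring.
Qed.

Lemma norm_triangle x y : norm (vadd x y) <= norm x + norm y.
Proof.
  pose proof (norm_vadd_sq x y); pose proof (cauchy_schwarz x y).
  pose proof (norm_nonneg x); pose proof (norm_nonneg y); pose proof (norm_nonneg (vadd x y)).
  nra.
Qed.

Lemma vsub_chasles a b c : vadd (vsub b a) (vsub c b) = vsub c a.
Proof. apply pt_eq_coord; intros m _; rewrite coord_vadd, !coord_vsub; ring. Qed.

Lemma pdist_triangle a b c : pdist a c <= pdist a b + pdist b c.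
Proof. unfold pdist; rewrite <- (vsub_chasles a b c); apply norm_triangle. Qed.

Lemma pdist_refl x : pdist x x = 0.
Proof.
  unfold pdist, norm; replace (dot (vsub x x) (vsub x x)) with 0; [apply sqrt_0|].
  destruct x as [[a b] c]; unfold dot, vsub; simpl; ring.
Qed.

(* Equality forces equality in Cauchy-Schwarz. *)
Lemma norm_triangle_eq x y : norm x + norm y <= norm (vadd x y) ->
  vscale (norm y) x = vscale (norm x) y.
Proof.
  intros Heq.
  pose proof (norm_vadd_sq x y) as Hsq; pose proof (norm_triangle x y).
  assert (Hn : norm (vadd x y) = norm x + norm y) by lra.
  rewrite Hn in Hsq.
  assert (Hd : dot x y = norm x * norm y) by lra.
  set (v := vsub (vscale (norm y) x) (vscale (norm x) y)).
  assert (Hv : dot v v = 0).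
  { transitivity (norm y * norm y * dot x x - 2 * norm x * norm y * dot x y
                  + norm x * norm x * dot y y).
    - unfold v; destruct x as [[a b] c], y as [[d e] f]; unfold dot, vsub, vscale; simpl; ring.
    - rewrite Hd, <- norm_mul_self, <- (norm_mul_self y); ring. }
  apply pt_eq_coord; intros m _.
  pose proof (dot_self_eq0 v Hv m) as Em.
  unfold v in Em; rewrite coord_vsub in Em; lra.
Qed.

Lemma on_segment_of_pdist a b c : a <> c ->
  pdist a b + pdist b c <= pdist a c -> on_segment a c b.
Proof.
  unfold pdist; intros Hac Hle.
  rewrite <- (vsub_chasles a b c) in Hle.
  pose proof (norm_triangle_eq _ _ Hle) as Hcol.
  rewrite (vsub_chasles a b c) in Hle.
  pose proof (norm_vsub_pos _ _ Hac) as Hpos.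
  pose proof (norm_triangle (vsub b a) (vsub c b)) as Htr; rewrite vsub_chasles in Htr.
  pose proof (norm_nonneg (vsub b a)); pose proof (norm_nonneg (vsub c b)).
  set (nx := norm (vsub b a)) in *; set (ny := norm (vsub c b)) in *.
  assert (Hs : 0 < nx + ny) by lra.
  set (t := nx / (nx + ny)).
  assert (Ht : t * (nx + ny) = nx) by (unfold t; field; lra).
  exists t; split; [nra|].
  apply pt_eq_coord; intros m _.
  pose proof (f_equal (fun w => coord w m) Hcol) as Em; simpl in Em.
  rewrite !coord_vscale, !coord_vsub in Em.
  rewrite coord_vadd, coord_vscale, coord_vsub.
  apply (Rmult_eq_reg_r (nx + ny)); [|lra].
  transitivity (coord a m * (nx + ny) + t * (nx + ny) * (coord c m - coord a m)); [|ring].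
  rewrite Ht; lra.
Qed.

(** * Integer points and parity *)

Definition is_int (r : R) : Prop := exists z : Z, r = IZR z.
Definition is_even (r : R) : Prop := exists z : Z, r = 2 * IZR z.
Definition is_sign (e : R) : Prop := e = 1 \/ e = -1.
Definition is_bit (b : R) : Prop := b = 0 \/ b = 1.

Lemma is_int_add x y : is_int x -> is_int y -> is_int (x + y).
Proof. intros [a ->] [b ->]; exists (a + b)%Z; rewrite plus_IZR; reflexivity. Qed.

Lemma is_int_mul x y : is_int x -> is_int y -> is_int (x * y).
Proof. intros [a ->] [b ->]; exists (a * b)%Z; rewrite mult_IZR; reflexivity. Qed.

Lemma is_int_opp x : is_int x -> is_int (- x).
Proof. intros [a ->]; exists (- a)%Z; rewrite opp_IZR; reflexivity. Qed.

Lemma is_int_sub x y : is_int x -> is_int y -> is_int (x - y).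
Proof. intros; apply is_int_add; [|apply is_int_opp]; assumption. Qed.

Lemma is_int_bit b : is_bit b -> is_int b.
Proof. intros [-> | ->]; [exists 0%Z | exists 1%Z]; reflexivity. Qed.

Lemma is_int_sign e : is_sign e -> is_int e.
Proof. intros [-> | ->]; [exists 1%Z | exists (-1)%Z]; reflexivity. Qed.

Lemma is_bit_of_int x : is_int x -> 0 <= x <= 1 -> is_bit x.
Proof.
  intros [z ->] [H0 H1]; apply le_IZR in H0; apply le_IZR in H1.
  assert (z = 0 \/ z = 1)%Z as [-> | ->] by lia; [left | right]; reflexivity.
Qed.

Lemma is_even_add x y : is_even x -> is_even y -> is_even (x + y).
Proof. intros [a ->] [b ->]; exists (a + b)%Z; rewrite plus_IZR; ring. Qed.

Lemma is_even_opp x : is_even x -> is_even (- x).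
Proof. intros [a ->]; exists (- a)%Z; rewrite opp_IZR; ring. Qed.

Lemma is_even_sign_succ_mul e x : is_sign e -> is_int x -> is_even ((e + 1) * x).
Proof. intros [-> | ->] [z ->]; [exists z | exists 0%Z]; simpl; ring. Qed.

Lemma odd_pair_sum_sq_lt_10 (a b w : Z) : (a + b = 2 * w)%Z -> (a * a + b * b < 10)%Z ->
  ~ (exists x y, a = (2 * x)%Z /\ b = (2 * y)%Z) -> (a * a + b * b = 2)%Z.
Proof.
  intros Hab Hlt Hodd.
  destruct (Z.Even_or_Odd a) as [[x Hx] | [x Hx]].
  - exfalso; apply Hodd; exists x, (w - x)%Z; lia.
  - assert (Hb : b = (2 * (w - x - 1) + 1)%Z) by lia.
    set (y := (w - x - 1)%Z) in *; subst a b.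
    assert (0 <= x * (x + 1) /\ 0 <= y * (y + 1))%Z as [Px Py] by nia.
    assert (-1 <= x <= 0 /\ -1 <= y <= 0)%Z as [Hx Hy] by nia.
    assert (x = -1 \/ x = 0)%Z as [-> | ->] by lia; assert (y = -1 \/ y = 0)%Z as [-> | ->] by lia;
      reflexivity.
Qed.

Lemma vertex_in_cube x : is_vertex x -> in_cube x.
Proof. intros H m Hm; destruct (H m Hm) as [-> | ->]; lra. Qed.

Lemma not_vertex_of_coord x m : (m < 3)%nat -> 0 < coord x m < 1 -> ~ is_vertex x.
Proof. intros Hm Hx H; destruct (H m Hm); lra. Qed.

Lemma in_cube_perm3 i j k x : perm3 i j k ->
  0 <= coord x i <= 1 -> 0 <= coord x j <= 1 -> 0 <= coord x k <= 1 -> in_cube x.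
Proof.
  intros H Hi Hj Hk m Hm; destruct (perm3_cases i j k m H Hm) as [-> | [-> | ->]]; assumption.
Qed.

Lemma in_face_segpt i b x y t : in_face i b x -> in_face i b y -> 0 <= t <= 1 ->
  in_face i b (segpt x y t).
Proof.
  intros [Hx Ex] [Hy Ey] Ht; split.
  - intros m Hm; rewrite coord_segpt; pose proof (Hx m Hm); pose proof (Hy m Hm); nra.
  - rewrite coord_segpt, Ex, Ey; ring.
Qed.

Lemma opposite_on_face_axes A B : opposite_on_face A B ->
  exists i j k, perm3 i j k /\
    is_bit (coord A i) /\ is_bit (coord A j) /\ is_bit (coord A k) /\
    coord B i = coord A i /\ coord B j = 1 - coord A j /\ coord B k = 1 - coord A k.
Proof.
  intros (HA & HB & i & Hi & Ei & Hne).
  destruct (perm3_complete i Hi) as (j & k & H).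
  pose proof H as (_ & Hj & Hk & Hij & Hik & _).
  pose proof (Hne j Hj ltac:(lia)); pose proof (Hne k Hk ltac:(lia)).
  exists i, j, k; split; [assumption|].
  destruct (HA j Hj), (HB j Hj), (HA k Hk), (HB k Hk), (HA i Hi);
    unfold is_bit; repeat split; try lra; congruence.
Qed.

Lemma opposite_pdist A B : opposite_on_face A B -> pdist A B = sqrt 2.
Proof.
  intros H; destruct (opposite_on_face_axes A B H) as (i & j & k & Hp & _ & Hj & Hk & Ei & Ej & Ek).
  unfold pdist; rewrite (norm_perm3 i j k _ Hp), !coord_vsub, Ei, Ej, Ek.
  f_equal; destruct Hj as [-> | ->], Hk as [-> | ->]; ring.
Qed.

Lemma opposite_coord_sum_even A B : opposite_on_face A B -> is_even (coord_sum A + coord_sum B).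
Proof.
  intros H; destruct (opposite_on_face_axes A B H) as (i & j & k & Hp & Hi & _ & _ & Ei & Ej & Ek).
  destruct (is_int_bit _ Hi) as [z Hz]; exists (z + 1)%Z.
  rewrite !(coord_sum_perm3 i j k _ Hp), Ei, Ej, Ek, plus_IZR, <- Hz; simpl; ring.
Qed.

Lemma path_len_S p k : path_len p (S k) = path_len p k + pdist (p k) (p (S k)).
Proof. reflexivity. Qed.

Lemma path_len_mono p k m : (k <= m)%nat -> path_len p k <= path_len p m.
Proof.
  induction 1; [lra|]; rewrite path_len_S; pose proof (norm_nonneg (vsub (p (S m)) (p m))).
  unfold pdist; lra.
Qed.

Lemma pdist_le_path_len p k m : (k <= m)%nat ->
  pdist (p k) (p m) <= path_len p m - path_len p k.
Proof.
  induction 1; [rewrite pdist_refl; lra|].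
  pose proof (pdist_triangle (p k) (p m) (p (S m))); rewrite path_len_S; lra.
Qed.

Lemma path_len_find_segment p n t : (1 <= n)%nat -> 0 <= t <= path_len p n ->
  exists k, (k < n)%nat /\ path_len p k <= t <= path_len p (S k).
Proof.
  induction n as [|n IH]; intros Hn Ht; [lia|].
  destruct (Nat.eq_dec n 0) as [-> | Hn0]; [exists 0%nat; simpl in *; split; [lia | lra]|].
  destruct (Rle_dec t (path_len p n)) as [Hle | Hgt].
  - destruct (IH ltac:(lia) ltac:(lra)) as (k & Hk & Hkt); exists k; split; [lia | assumption].
  - exists n; split; [lia | lra].
Qed.

Lemma traj_path_len_pos A B n p : geodesic_traj A B n p -> 0 < path_len p n.
Proof.
  intros (Hn & _ & _ & Hseg & _).
  pose proof (path_len_mono p 1 n Hn) as H1; rewrite path_len_S in H1.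
  pose proof (norm_vsub_pos _ _ (proj1 (Hseg 0%nat ltac:(lia)))).
  simpl in H1; unfold pdist in H1; lra.
Qed.

Lemma traj_segpt_not_vertex A B n p k t : geodesic_traj A B n p -> (k < n)%nat ->
  0 <= t <= 1 -> (k = 0%nat -> 0 < t) -> (S k = n -> t < 1) ->
  ~ is_vertex (segpt (p k) (p (S k)) t).
Proof.
  intros (_ & _ & _ & _ & Hbreak & Hint & _) Hk Ht H0 H1.
  destruct (Req_dec t 0) as [-> | Ht0].
  { assert (k <> 0%nat) by (intros ->; pose proof (H0 eq_refl); lra).
    rewrite segpt0; apply Hbreak; lia. }
  destruct (Req_dec t 1) as [-> | Ht1].
  { assert (S k <> n) by (intros E; pose proof (H1 E); lra).
    rewrite segpt1; apply Hbreak; lia. }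
  apply Hint; [assumption | lra].
Qed.

Lemma traj_len_ge_pdist A B n p : geodesic_traj A B n p -> pdist A B <= path_len p n.
Proof.
  intros (Hn & H0 & HnB & _); pose proof (pdist_le_path_len p 0 n ltac:(lia)).
  rewrite H0, HnB in *; simpl path_len in *; lra.
Qed.

Lemma traj_on_segment A B n p : geodesic_traj A B n p -> A <> B ->
  path_len p n <= pdist A B -> forall k, (k <= n)%nat -> on_segment A B (p k).
Proof.
  intros (_ & H0 & Hn & _) HAB Hlen k Hk.
  apply on_segment_of_pdist; [assumption|].
  pose proof (pdist_le_path_len p 0 k ltac:(lia)); pose proof (pdist_le_path_len p k n Hk).
  rewrite H0, Hn in *; simpl path_len in *; lra.
Qed.

(** * Charts of the unfolding *)

Record axis : Type := Axis { ax_idx : nat; ax_sgn : R; ax_off : R }.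

Definition ax_eval (a : axis) (x : pt) : R := ax_off a + ax_sgn a * coord x (ax_idx a).

Definition axis_ok (a : axis) : Prop := is_sign (ax_sgn a) /\ is_int (ax_off a).

(* A chart lays the face {x_i = b} isometrically onto the plane, by
   x |-> (M + e1 x_j1, N + e2 x_j2) with e1, e2 = +-1 and M, N integers, so
   that vertices land on Z^2.  The parity condition, where s is the coordinate
   sum of the starting vertex, makes the image of a vertex v have coordinate
   sum of the same parity as s + coord_sum v. *)
Record chart : Type := Chart { ch_face : nat; ch_level : R; ch_u : axis; ch_v : axis }.

Definition chart_dom (c : chart) : pt -> Prop := in_face (ch_face c) (ch_level c).

Definition chart_ok (s : R) (c : chart) : Prop :=
  perm3 (ch_face c) (ax_idx (ch_u c)) (ax_idx (ch_v c)) /\ is_bit (ch_level c) /\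
  axis_ok (ch_u c) /\ axis_ok (ch_v c) /\
  is_even (ax_off (ch_u c) + ax_off (ch_v c) + ch_level c + s).

Lemma ax_eval_sub a x y :
  ax_eval a y - ax_eval a x = ax_sgn a * (coord y (ax_idx a) - coord x (ax_idx a)).
Proof. unfold ax_eval; ring. Qed.

Lemma ax_eval_segpt a x y t :
  ax_eval a (segpt x y t) = ax_eval a x + t * (ax_eval a y - ax_eval a x).
Proof. unfold ax_eval; rewrite coord_segpt; ring. Qed.

Lemma axis_coord_int a x : axis_ok a -> is_int (ax_eval a x) -> is_int (coord x (ax_idx a)).
Proof.
  intros [He Hoff] Hx.
  replace (coord x (ax_idx a)) with (ax_sgn a * (ax_eval a x - ax_off a))
    by (unfold ax_eval; destruct He as [-> | ->]; ring).
  apply is_int_mul; [apply is_int_sign | apply is_int_sub]; assumption.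
Qed.

Lemma chart_vertex s c x : chart_ok s c -> chart_dom c x ->
  is_int (ax_eval (ch_u c) x) -> is_int (ax_eval (ch_v c) x) -> is_vertex x.
Proof.
  intros (Hp & Hb & Hu & Hv & _) [Hcube Hx] Iu Iv m Hm.
  destruct (perm3_cases _ _ _ m Hp Hm) as [-> | [-> | ->]].
  - rewrite Hx; assumption.
  - apply is_bit_of_int; [apply (axis_coord_int _ _ Hu Iu) | apply Hcube; assumption].
  - apply is_bit_of_int; [apply (axis_coord_int _ _ Hv Iv) | apply Hcube; assumption].
Qed.

Lemma chart_vertex_image s c x : chart_ok s c -> chart_dom c x -> is_vertex x ->
  is_int (ax_eval (ch_u c) x) /\ is_int (ax_eval (ch_v c) x) /\
  is_even (ax_eval (ch_u c) x + ax_eval (ch_v c) x + coord_sum x + s).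
Proof.
  destruct c as [i b u v]; unfold chart_ok, chart_dom, axis_ok; simpl.
  intros (Hp & Hb & [Hu Mu] & [Hv Mv] & Hev) [_ Hx] Hvx.
  pose proof Hp as (_ & Hj1 & Hj2 & _).
  assert (Bu : is_int (coord x (ax_idx u))) by (apply is_int_bit, Hvx; assumption).
  assert (Bv : is_int (coord x (ax_idx v))) by (apply is_int_bit, Hvx; assumption).
  unfold ax_eval; split; [|split].
  - apply is_int_add, is_int_mul, Bu; [|apply is_int_sign]; assumption.
  - apply is_int_add, is_int_mul, Bv; [|apply is_int_sign]; assumption.
  - replace (ax_off u + ax_sgn u * coord x (ax_idx u) + (ax_off v + ax_sgn v * coord x (ax_idx v))
             + coord_sum x + s)
      with ((ax_off u + ax_off v + b + s) + (ax_sgn u + 1) * coord x (ax_idx u)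
             + (ax_sgn v + 1) * coord x (ax_idx v))
      by (rewrite (coord_sum_perm3 _ _ _ x Hp), Hx; ring).
    apply is_even_add; [apply is_even_add|]; [|apply is_even_sign_succ_mul..]; assumption.
Qed.

Definition chart_agree (c c' : chart) (x : pt) : Prop :=
  ax_eval (ch_u c') x = ax_eval (ch_u c) x /\ ax_eval (ch_v c') x = ax_eval (ch_v c) x.

Definition axis_step (a a' : axis) (x p q : pt) (r : R) : Prop :=
  ax_eval a' q - ax_eval a' p = r * (ax_eval a p - ax_eval a x).

Definition chart_step (c c' : chart) (x p q : pt) (r : R) : Prop :=
  axis_step (ch_u c) (ch_u c') x p q r /\ axis_step (ch_v c) (ch_v c') x p q r.

Lemma chart_step_agree c c0 c' x p q r : chart_agree c c0 x -> chart_agree c c0 p ->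
  chart_step c0 c' x p q r -> chart_step c c' x p q r.
Proof.
  unfold chart_step, axis_step; intros [Ux Vx] [Up Vp]; rewrite Ux, Vx, Up, Vp; auto.
Qed.

Lemma chart_step_collinear c x p q l : vsub q p = vscale l (vsub p x) ->
  chart_step c c x p q l.
Proof.
  intros E; split; unfold axis_step; rewrite !ax_eval_sub, <- !coord_vsub, E, coord_vscale; ring.
Qed.

(* Crossing the edge {x_i = b, x_j = b'} (j = ax_idx a) onto the face
   {x_j = b'}: the distance b' - x_j to the edge, read on the old face, is
   continued by the distance x_i - b on the new face.  The factors (1 - 2 b),
   (1 - 2 b') are the inward orientations of the two faces. *)
Definition fold_axis (i : nat) (b b' : R) (a : axis) : axis :=
  let e := - ax_sgn a * (1 - 2 * b) * (1 - 2 * b') in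
  Axis i e (ax_off a + ax_sgn a * b' - e * b).

Lemma fold_sign b b' e : is_bit b -> is_bit b' -> is_sign e ->
  is_sign (- e * (1 - 2 * b) * (1 - 2 * b')).
Proof. intros [-> | ->] [-> | ->] [-> | ->]; unfold is_sign; lra. Qed.

Lemma fold_axis_ok i b b' a : is_bit b -> is_bit b' -> axis_ok a -> axis_ok (fold_axis i b b' a).
Proof.
  intros Hb Hb' [He Hoff]; pose proof (fold_sign b b' _ Hb Hb' He) as He'.
  split; simpl; [assumption|].
  apply is_int_sub; [apply is_int_add|]; [|apply is_int_mul..];
    auto using is_int_sign, is_int_bit.
Qed.

Lemma fold_axis_parity i b b' a : is_bit b -> is_bit b' -> is_sign (ax_sgn a) ->
  is_even (ax_off (fold_axis i b b' a) + b' - (ax_off a + b)).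
Proof.
  intros Hb Hb' He; pose proof (fold_sign b b' _ Hb Hb' He) as He'; simpl.
  set (e' := - ax_sgn a * (1 - 2 * b) * (1 - 2 * b')) in *.
  replace (ax_off a + ax_sgn a * b' - e' * b + b' - (ax_off a + b))
    with ((ax_sgn a + 1) * b' + - ((e' + 1) * b)) by ring.
  apply is_even_add; [|apply is_even_opp]; apply is_even_sign_succ_mul;
    auto using is_int_bit.
Qed.

Lemma fold_axis_edge i b b' a z : coord z i = b -> coord z (ax_idx a) = b' ->
  ax_eval (fold_axis i b b' a) z = ax_eval a z.
Proof. intros Hi Hj; unfold ax_eval; simpl; rewrite Hi, Hj; ring. Qed.

(* Only |x_i - b| along [p, q] is known from the lengths; its sign comes from
   [x, p] running towards the edge and [p, q] away from it inside the cube. *)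
Lemma fold_axis_step i b b' a x p q r :
  is_bit b -> is_bit b' -> is_sign (ax_sgn a) ->
  coord p i = b -> coord p (ax_idx a) = b' ->
  0 <= coord x (ax_idx a) <= 1 -> 0 <= coord q i <= 1 -> 0 < r ->
  (coord q i - b) ^ 2 = (r * (b' - coord x (ax_idx a))) ^ 2 ->
  axis_step a (fold_axis i b b' a) x p q r.
Proof.
  intros Hb Hb' He Hp Hp' Hxj Hqi Hr Hsq.
  unfold axis_step; rewrite !ax_eval_sub; simpl; rewrite Hp, Hp'.
  assert (Hroots : (coord q i - b - r * (b' - coord x (ax_idx a)))
                   * (coord q i - b + r * (b' - coord x (ax_idx a))) = 0) by nra.
  apply Rmult_integral in Hroots.
  destruct Hb as [-> | ->], Hb' as [-> | ->], He as [-> | ->], Hroots; nra.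
Qed.

Definition fold_chart (c : chart) (i' : nat) (b' : R) : chart :=
  if Nat.eqb i' (ax_idx (ch_u c))
  then Chart i' b' (fold_axis (ch_face c) (ch_level c) b' (ch_u c)) (ch_v c)
  else Chart i' b' (ch_u c) (fold_axis (ch_face c) (ch_level c) b' (ch_v c)).

Lemma fold_chart_face c i' b' : ch_face (fold_chart c i' b') = i'.
Proof. unfold fold_chart; destruct (Nat.eqb _ _); reflexivity. Qed.

Lemma fold_chart_level c i' b' : ch_level (fold_chart c i' b') = b'.
Proof. unfold fold_chart; destruct (Nat.eqb _ _); reflexivity. Qed.

Lemma fold_chart_ok s c i' b' : chart_ok s c -> (i' < 3)%nat -> i' <> ch_face c ->
  is_bit b' -> chart_ok s (fold_chart c i' b').
Proof.
  destruct c as [i b u v]; unfold chart_ok, fold_chart; simpl.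
  intros (Hp & Hb & [Hu Mu] & [Hv Mv] & Hev) Hi' Hne Hb'.
  destruct (Nat.eqb_spec i' (ax_idx u)) as [E | E]; cbn [ch_face ch_level ch_u ch_v].
  - split; [simpl; unfold perm3 in *; lia|]; split; [assumption|].
    split; [apply fold_axis_ok; [..|split]; assumption|]; split; [split; assumption|].
    replace (ax_off (fold_axis i b b' u) + ax_off v + b' + s)
      with ((ax_off u + ax_off v + b + s) + (ax_off (fold_axis i b b' u) + b' - (ax_off u + b)))
      by ring.
    apply is_even_add; [|apply fold_axis_parity]; assumption.
  - split; [simpl; unfold perm3 in *; lia|]; split; [assumption|].
    split; [split; assumption|]; split; [apply fold_axis_ok; [..|split]; assumption|].
    replace (ax_off u + ax_off (fold_axis i b b' v) + b' + s)
      with ((ax_off u + ax_off v + b + s) + (ax_off (fold_axis i b b' v) + b' - (ax_off v + b)))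
      by ring.
    apply is_even_add; [|apply fold_axis_parity]; assumption.
Qed.

Lemma fold_chart_agree s c i' b' z : chart_ok s c -> (i' < 3)%nat -> i' <> ch_face c ->
  chart_dom c z -> coord z i' = b' -> chart_agree c (fold_chart c i' b') z.
Proof.
  destruct c as [i b u v]; unfold chart_ok, chart_dom, chart_agree, fold_chart; simpl.
  intros (Hp & _) Hi' Hne [_ Hz] Hz'.
  destruct (Nat.eqb_spec i' (ax_idx u)) as [E | E]; cbn [ch_face ch_level ch_u ch_v].
  - split; [apply fold_axis_edge; congruence | reflexivity].
  - assert (i' = ax_idx v) by (unfold perm3 in Hp; lia).
    split; [reflexivity | apply fold_axis_edge; congruence].
Qed.

(* [a] is the folded axis, [w] the axis along the edge. *)
Lemma fold_step_axes i j k b b' a w x p q : perm3 i j k ->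
  ax_idx a = j -> ax_idx w = k -> is_bit b -> is_bit b' -> is_sign (ax_sgn a) ->
  in_face i b x -> in_face i b p -> in_face j b' p -> in_face j b' q -> x <> p -> p <> q ->
  coord (vsub p x) k / norm (vsub p x) = coord (vsub q p) k / norm (vsub q p) ->
  axis_step a (fold_axis i b b' a) x p q (pdist p q / pdist x p) /\
  axis_step w w x p q (pdist p q / pdist x p).
Proof.
  intros Hp Ea Ew Hb Hb' He [Hx Exi] [_ Epi] [_ Epj] [Hq Eqj] Hxp Hpq Hdir.
  pose proof Hp as (Hi & Hj & Hk & _).
  pose proof (norm_vsub_pos _ _ Hxp) as Hna; pose proof (norm_vsub_pos _ _ Hpq) as Hnc.
  unfold pdist; set (na := norm (vsub p x)) in *; set (nc := norm (vsub q p)) in *.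
  set (r := nc / na).
  assert (Hr : 0 < r) by (apply Rdiv_lt_0_compat; assumption).
  assert (Hnc_r : nc = r * na) by (unfold r; field; lra).
  rewrite !coord_vsub in Hdir.
  assert (Hwk : coord q k - coord p k = r * (coord p k - coord x k)).
  { unfold r; apply (Rmult_eq_reg_r (/ nc)); [|apply Rinv_neq_0_compat; lra].
    unfold Rdiv in Hdir; rewrite <- Hdir; field; lra. }
  assert (Ena : na * na = (b' - coord x j) ^ 2 + (coord p k - coord x k) ^ 2).
  { unfold na; rewrite norm_mul_self, (dot_perm3 i j k _ _ Hp), !coord_vsub, Exi, Epi, Epj; ring. }
  assert (Enc : nc * nc = (coord q i - b) ^ 2 + (coord q k - coord p k) ^ 2).
  { unfold nc; rewrite norm_mul_self, (dot_perm3 i j k _ _ Hp), !coord_vsub, Epi, Epj, Eqj; ring. }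
  split.
  - subst j; apply fold_axis_step; auto.
    rewrite Hnc_r, Hwk in Enc; nra.
  - unfold axis_step; rewrite !ax_eval_sub, Ew, Hwk; ring.
Qed.

Lemma fold_chart_step s c i' b' x p q : chart_ok s c -> (i' < 3)%nat -> i' <> ch_face c ->
  is_bit b' -> chart_dom c x -> chart_dom c p -> in_face i' b' p -> in_face i' b' q ->
  x <> p -> p <> q ->
  (forall j, (j < 3)%nat -> j <> ch_face c -> j <> i' ->
     coord (vsub p x) j / norm (vsub p x) = coord (vsub q p) j / norm (vsub q p)) ->
  chart_step c (fold_chart c i' b') x p q (pdist p q / pdist x p).
Proof.
  destruct c as [i b u v]; unfold chart_ok, chart_dom, chart_step, fold_chart; simpl.
  intros (Hp & Hb & [Hu _] & [Hv _] & _) Hi' Hne Hb' Hx Hpf Hp' Hq Hxp Hpq Hdir.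
  pose proof Hp as (_ & Hj & Hk & _).
  destruct (Nat.eqb_spec i' (ax_idx u)) as [E | E]; cbn [ch_face ch_level ch_u ch_v].
  - subst i'; apply (fold_step_axes i (ax_idx u) (ax_idx v)); auto.
    apply Hdir; unfold perm3 in Hp; lia.
  - assert (i' = ax_idx v) by (unfold perm3 in Hp; lia); subst i'.
    apply and_comm, (fold_step_axes i (ax_idx v) (ax_idx u)); auto using perm3_swap23.
    apply Hdir; unfold perm3 in Hp; lia.
Qed.

(** * Developing a geodesic trajectory *)

Lemma chart_agree_refl c x : chart_agree c c x.
Proof. split; reflexivity. Qed.

Lemma chart_agree_trans c c0 c' x :
  chart_agree c c0 x -> chart_agree c0 c' x -> chart_agree c c' x.
Proof. intros [U V] [U' V']; split; congruence. Qed.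

Lemma chart_transfer s c i b x y : chart_ok s c -> is_face i b ->
  chart_dom c x -> chart_dom c y -> in_face i b x -> in_face i b y ->
  exists c', chart_ok s c' /\ ch_face c' = i /\ ch_level c' = b /\
    chart_agree c c' x /\ chart_agree c c' y.
Proof.
  intros Hc [Hi Hb] Hx Hy Hx' Hy'.
  destruct (Nat.eq_dec i (ch_face c)) as [-> | Hne].
  - exists c; split; [assumption|]; split; [reflexivity|].
    split; [|split; apply chart_agree_refl].
    destruct Hx as [_ Ex], Hx' as [_ Ex']; congruence.
  - exists (fold_chart c i b); split; [apply fold_chart_ok; assumption|].
    rewrite fold_chart_face, fold_chart_level; split; [reflexivity|]; split; [reflexivity|].
    destruct Hx' as [_ Ex], Hy' as [_ Ey].
    split; apply (fold_chart_agree s); assumption.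
Qed.

Lemma straight_at_unfold s c x p q : chart_ok s c -> chart_dom c x -> chart_dom c p ->
  x <> p -> p <> q -> straight_at x p q ->
  exists c', chart_ok s c' /\ chart_dom c' p /\ chart_dom c' q /\
    chart_agree c c' p /\ chart_step c c' x p q (pdist p q / pdist x p).
Proof.
  intros Hc Hx Hp Hxp Hpq
    (i & b & i' & b' & Hf & Hf' & Hx' & Hp' & Hp'' & Hq' & Hcont).
  destruct (chart_transfer s c i b x p Hc Hf Hx Hp Hx' Hp')
    as (c0 & Hc0 & Ei & Eb & Ax & Ap).
  assert (Hdom0 : chart_dom c0 = in_face i b) by (unfold chart_dom; rewrite Ei, Eb; reflexivity).
  destruct Hcont as [(<- & <- & l & Hl & E) | (Hne & Hdir)].
  - exists c0; rewrite Hdom0; do 4 (split; [assumption|]).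
    replace (pdist p q / pdist x p) with l.
    + apply (chart_step_agree c c0 c0); [..|apply chart_step_collinear]; assumption.
    + pose proof (norm_vsub_pos _ _ Hxp).
      unfold pdist; rewrite E, norm_scale by lra; field; lra.
  - destruct Hf' as [Hi' Hb'].
    exists (fold_chart c0 i' b'); split; [apply fold_chart_ok; auto; congruence|].
    unfold chart_dom at 1 2; rewrite fold_chart_face, fold_chart_level.
    split; [assumption|]; split; [assumption|]; split.
    + apply (chart_agree_trans c c0); [assumption|].
      apply (fold_chart_agree s); auto; [congruence | rewrite Hdom0; assumption | apply Hp''].
    + apply (chart_step_agree c c0); try assumption.
      apply (fold_chart_step s); rewrite ?Hdom0, ?Ei; auto.
Qed.

Definition develops (c : chart) (ux uy : R) (p : nat -> pt) (m : nat) : Prop :=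
  ax_eval (ch_u c) (p m) = path_len p m * ux /\ ax_eval (ch_v c) (p m) = path_len p m * uy.

(* Segment [k] of the path is mapped by a chart onto the planar line through
   the origin with unit direction (ux, uy), at the arc-length abscissae. *)
Definition developed (s ux uy : R) (p : nat -> pt) (k : nat) : Prop :=
  exists c, chart_ok s c /\ chart_dom c (p k) /\ chart_dom c (p (S k)) /\
    develops c ux uy p k /\ develops c ux uy p (S k).

Lemma developed_start A B n p : geodesic_traj A B n p -> is_vertex A ->
  exists ux uy, ux * ux + uy * uy = 1 /\ developed (coord_sum A) ux uy p 0.
Proof.
  intros (Hn & HpA & _ & Hseg & _) HA.
  destruct (Hseg 0%nat ltac:(lia)) as [Hne (i & b & [Hi Hb] & [_ E0] & Hp1)].
  destruct (perm3_complete i Hi) as (j1 & j2 & Hp).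
  pose proof Hp as (_ & Hj1 & Hj2 & _).
  pose proof (norm_vsub_pos _ _ Hne) as Hd.
  rewrite HpA in *.
  set (d := norm (vsub (p 1%nat) A)) in *.
  assert (Ed : d * d = (coord (p 1%nat) j1 - coord A j1) ^ 2
                      + (coord (p 1%nat) j2 - coord A j2) ^ 2).
  { unfold d; rewrite norm_mul_self, (dot_perm3 i j1 j2 _ _ Hp), !coord_vsub, E0.
    destruct Hp1 as [_ ->]; ring. }
  exists ((coord (p 1%nat) j1 - coord A j1) / d), ((coord (p 1%nat) j2 - coord A j2) / d).
  split.
  { transitivity ((d * d) / (d * d)); [rewrite Ed at 1; field | field]; lra. }
  exists (Chart i b (Axis j1 1 (- coord A j1)) (Axis j2 1 (- coord A j2))).
  unfold chart_ok, chart_dom, axis_ok, develops, ax_eval; simpl; rewrite HpA.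
  assert (HA1 : is_int (coord A j1)) by (apply is_int_bit, HA; assumption).
  assert (HA2 : is_int (coord A j2)) by (apply is_int_bit, HA; assumption).
  split; [|split; [split; [apply vertex_in_cube|]; assumption|]].
  { split; [assumption|]; split; [assumption|].
    split; [split; [left; reflexivity | apply is_int_opp; assumption]|].
    split; [split; [left; reflexivity | apply is_int_opp; assumption]|].
    destruct (is_int_bit _ Hb) as [z Hz]; exists z.
    rewrite (coord_sum_perm3 i j1 j2 _ Hp), E0, <- Hz; ring. }
  split; [assumption|].
  simpl path_len; change (pdist A (p 1%nat)) with d.
  split; [split|split]; field; lra.
Qed.

Lemma developed_succ A B n p s ux uy k : geodesic_traj A B n p -> (S k < n)%nat ->
  developed s ux uy p k -> developed s ux uy p (S k).
Proof.
  intros (_ & _ & _ & Hseg & _ & _ & Hstraight) Hk (c & Hc & Dk & Dk1 & [Uk Vk] & [Uk1 Vk1]).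
  destruct (straight_at_unfold s c (p k) (p (S k)) (p (S (S k))) Hc Dk Dk1)
    as (c' & Hc' & D1 & D2 & [Au Av] & [Su Sv]);
    [apply Hseg; lia | apply Hseg; lia | apply (Hstraight (S k)); lia |].
  pose proof (norm_vsub_pos _ _ (proj1 (Hseg k ltac:(lia)))) as Hd.
  fold (pdist (p k) (p (S k))) in Hd.
  set (d1 := pdist (p k) (p (S k))) in *; set (d2 := pdist (p (S k)) (p (S (S k)))) in *.
  assert (Hline : forall e0 e1 e2 w, e0 = path_len p k * w -> e1 = path_len p (S k) * w ->
            e2 - e1 = d2 / d1 * (e1 - e0) -> e2 = path_len p (S (S k)) * w).
  { intros e0 e1 e2 w -> -> E.
    rewrite (path_len_S p (S k)); rewrite (path_len_S p k) in E |- *; fold d1 d2 in E |- *.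
    assert (E' : e2 = (path_len p k + d1) * w + d2 / d1 * ((path_len p k + d1) * w
                                                        - path_len p k * w)) by lra.
    rewrite E'; field; lra. }
  exists c'; do 3 (split; [assumption|]); unfold develops.
  split; [split; congruence|].
  unfold axis_step in Su, Sv; rewrite <- Au in Uk1; rewrite <- Av in Vk1.
  split; [apply (Hline (ax_eval (ch_u c) (p k)) (ax_eval (ch_u c') (p (S k))))
         | apply (Hline (ax_eval (ch_v c) (p k)) (ax_eval (ch_v c') (p (S k))))];
    congruence.
Qed.

Lemma developed_all A B n p s ux uy : geodesic_traj A B n p ->
  developed s ux uy p 0 -> forall k, (k < n)%nat -> developed s ux uy p k.
Proof.
  intros Hg H0 k; induction k as [|k IH]; intros Hk; [assumption|].
  apply (developed_succ A B n); [assumption | assumption | apply IH; lia].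
Qed.

(** * The lower bound *)

Lemma developed_off_lattice A B n p s ux uy t : geodesic_traj A B n p ->
  (forall k, (k < n)%nat -> developed s ux uy p k) ->
  0 < t < path_len p n -> is_int (t * ux) -> is_int (t * uy) -> False.
Proof.
  intros Hg Hdev Ht Iu Iv.
  pose proof Hg as (Hn & _ & _ & Hseg & _).
  destruct (path_len_find_segment p n t Hn ltac:(lra)) as (k & Hk & Hkt).
  destruct (Hdev k Hk) as (c & Hc & Dk & Dk1 & [Uk Vk] & [Uk1 Vk1]).
  pose proof (norm_vsub_pos _ _ (proj1 (Hseg k Hk))) as Hd.
  pose proof (path_len_S p k) as L1; unfold pdist in L1.
  set (d := norm (vsub (p (S k)) (p k))) in *.
  set (tau := (t - path_len p k) / d).
  assert (Htau : t = path_len p k + tau * d) by (unfold tau; field; lra).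
  assert (Htau01 : 0 <= tau <= 1) by (split; nra).
  assert (Himage : forall a w, ax_eval a (p k) = path_len p k * w ->
            ax_eval a (p (S k)) = path_len p (S k) * w ->
            ax_eval a (segpt (p k) (p (S k)) tau) = t * w).
  { intros a w E0 E1; rewrite ax_eval_segpt, E0, E1, L1, Htau; ring. }
  apply (traj_segpt_not_vertex A B n p k tau Hg Hk Htau01).
  - intros ->; simpl in Htau; nra.
  - intros <-; nra.
  - apply (chart_vertex s c); [assumption | apply in_face_segpt; assumption | |].
    + rewrite (Himage _ ux Uk Uk1); assumption.
    + rewrite (Himage _ uy Vk Vk1); assumption.
Qed.

Lemma developed_endpoint A B n p ux uy : opposite_on_face A B -> geodesic_traj A B n p ->
  (forall k, (k < n)%nat -> developed (coord_sum A) ux uy p k) ->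
  exists z1 z2 w, path_len p n * ux = IZR z1 /\ path_len p n * uy = IZR z2 /\ (z1 + z2 = 2 * w)%Z.
Proof.
  intros Ho (Hn & _ & HpB & _) Hdev.
  destruct (Hdev (pred n) ltac:(lia)) as (c & Hc & _ & DB & _ & [UB VB]).
  replace (S (pred n)) with n in DB, UB, VB by lia; rewrite HpB in DB, UB, VB.
  pose proof Ho as (_ & HB & _).
  destruct (chart_vertex_image _ c B Hc DB HB) as ([z1 E1] & [z2 E2] & Hev).
  pose proof (is_even_add _ _ Hev (is_even_opp _ (opposite_coord_sum_even A B Ho))) as [w Ew].
  exists z1, z2, w; split; [congruence|]; split; [congruence|].
  apply eq_IZR; rewrite plus_IZR, mult_IZR, <- E1, <- E2; lra.
Qed.

Lemma traj_len_ge_sqrt10 A B n p : opposite_on_face A B -> geodesic_traj A B n p ->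
  leaves_segment A B n p -> sqrt 10 <= path_len p n.
Proof.
  intros Ho Hg (k & Hk & Hoff).
  destruct (Rle_or_lt (sqrt 10) (path_len p n)) as [| Hlt]; [assumption | exfalso].
  pose proof (traj_path_len_pos A B n p Hg) as Hpos.
  pose proof (opposite_pdist A B Ho) as Hd.
  destruct (developed_start A B n p Hg (proj1 Ho)) as (ux & uy & Hu & H0).
  pose proof (developed_all A B n p _ ux uy Hg H0) as Hdev.
  destruct (developed_endpoint A B n p ux uy Ho Hg Hdev) as (z1 & z2 & w & E1 & E2 & Ew).
  set (L := path_len p n) in *.
  assert (HL : L * L = IZR (z1 * z1 + z2 * z2)).
  { rewrite plus_IZR, !mult_IZR, <- E1, <- E2.
    transitivity (L * L * (ux * ux + uy * uy)); [rewrite Hu|]; ring. }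
  assert (Z2 : (z1 * z1 + z2 * z2 = 2)%Z).
  { apply (odd_pair_sum_sq_lt_10 z1 z2 w Ew).
    - apply lt_IZR; rewrite <- HL.
      pose proof (sqrt_pos 10); pose proof (sqrt_sqrt 10 ltac:(lra)); nra.
    - intros (x & y & -> & ->).
      apply (developed_off_lattice A B n p _ ux uy (L / 2) Hg Hdev);
        [fold L; lra | exists x | exists y];
        [rewrite mult_IZR in E1 | rewrite mult_IZR in E2]; lra. }
  rewrite Z2 in HL.
  apply Hoff, (traj_on_segment A B n p Hg); [|rewrite Hd|assumption].
  - intros ->; rewrite pdist_refl in Hd; pose proof (sqrt_lt_R0 2 ltac:(lra)); lra.
  - fold L; rewrite <- HL, sqrt_square by lra; lra.
Qed.

(** * The two trajectories *)

Lemma diagonal_traj A B : opposite_on_face A B ->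
  geodesic_traj A B 1 (fun k => match k with O => A | _ => B end).
Proof.
  intros Ho; pose proof Ho as (HA & HB & _).
  destruct (opposite_on_face_axes A B Ho) as (i & j & k & Hp & Hb & Hj & _ & Ei & Ej & _).
  pose proof Hp as (Hi3 & Hj3 & _).
  split; [lia|]; split; [reflexivity|]; split; [reflexivity|]; split; [|split; [|split]].
  - intros m Hm; replace m with 0%nat by lia; split.
    + intros E; rewrite <- E in Ej; destruct Hj; lra.
    + exists i, (coord A i); split; [split; assumption|].
      split; split; auto using vertex_in_cube.
  - intros m Hm; lia.
  - intros m t Hm Ht; replace m with 0%nat by lia.
    apply (not_vertex_of_coord _ j Hj3).
    rewrite coord_vadd, coord_vscale, coord_vsub, Ej; destruct Hj as [-> | ->]; lra.
  - intros m Hm; lia.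
Qed.

Lemma opposite_on_face_pt_axes A B : opposite_on_face A B ->
  exists i j k b aj ak, perm3 i j k /\ is_bit b /\ is_bit aj /\ is_bit ak /\
    A = pt_axes i j b aj ak /\ B = pt_axes i j b (1 - aj) (1 - ak).
Proof.
  intros Ho.
  destruct (opposite_on_face_axes A B Ho) as (i & j & k & Hp & Hb & Hj & Hk & Ei & Ej & Ek).
  exists i, j, k, (coord A i), (coord A j), (coord A k).
  do 4 (split; [assumption|]).
  split; apply pt_eq_coord; intros m Hm; destruct (perm3_cases i j k m Hp Hm) as [-> | [-> | ->]];
    rewrite ?(coord_pt_axes1 i j k), ?(coord_pt_axes2 i j k), ?(coord_pt_axes3 i j k) by exact Hp;
    congruence.
Qed.

(* Unfolded, the detour over the faces {x_j = aj}, {x_i = 1 - b} and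
   {x_j = 1 - aj} is the segment of displacement (3, 1): three unit steps
   across the faces and one unit along x_k. *)
Definition detour (i j : nat) (b aj ak : R) (m : nat) : pt :=
  let d := 1 - 2 * ak in
  match m with
  | O => pt_axes i j b aj ak
  | 1 => pt_axes i j (1 - b) aj (ak + d / 3)
  | 2 => pt_axes i j (1 - b) (1 - aj) (ak + 2 * d / 3)
  | _ => pt_axes i j b (1 - aj) (1 - ak)
  end.

Section Detour.
Variables (i j k : nat) (b aj ak : R).
Hypotheses (Hp : perm3 i j k) (Hb : is_bit b) (Haj : is_bit aj) (Hak : is_bit ak).

Ltac coords := rewrite ?(coord_pt_axes1 i j k), ?(coord_pt_axes2 i j k),
  ?(coord_pt_axes3 i j k) by exact Hp.

Lemma detour_coord_k m : (m <= 3)%nat ->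
  coord (detour i j b aj ak m) k = ak + INR m * (1 - 2 * ak) / 3.
Proof.
  intros Hm; destruct m as [|[|[|[|m]]]]; try lia; simpl; coords;
    [|field..]; destruct Hak as [-> | ->]; field.
Qed.

Lemma detour_in_cube m : (m <= 3)%nat -> in_cube (detour i j b aj ak m).
Proof.
  intros Hm; apply (in_cube_perm3 i j k _ Hp); [| |rewrite detour_coord_k by lia];
    destruct m as [|[|[|[|m]]]]; try lia; simpl; coords;
    destruct Hb as [-> | ->]; destruct Haj as [-> | ->]; destruct Hak as [-> | ->]; simpl; lra.
Qed.

Lemma detour_pdist m : (m < 3)%nat ->
  pdist (detour i j b aj ak m) (detour i j b aj ak (S m)) = sqrt (10 / 9).
Proof.
  intros Hm; unfold pdist; rewrite (norm_perm3 i j k _ Hp), !coord_vsub; f_equal.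
  destruct m as [|[|[|m]]]; try lia; simpl; coords;
    destruct Hb as [-> | ->]; destruct Haj as [-> | ->]; destruct Hak as [-> | ->]; field.
Qed.

Lemma detour_faces :
  in_face j aj (detour i j b aj ak 0) /\ in_face j aj (detour i j b aj ak 1) /\
  in_face i (1 - b) (detour i j b aj ak 1) /\ in_face i (1 - b) (detour i j b aj ak 2) /\
  in_face j (1 - aj) (detour i j b aj ak 2) /\ in_face j (1 - aj) (detour i j b aj ak 3).
Proof.
  repeat split; try (apply detour_in_cube; lia); simpl; coords; reflexivity.
Qed.

Lemma detour_segment_face m : (m < 3)%nat -> exists (f : nat) (c : R), is_face f c /\
  in_face f c (detour i j b aj ak m) /\ in_face f c (detour i j b aj ak (S m)).
Proof.
  intros Hm; pose proof Hp as (Hi3 & Hj3 & _).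
  pose proof detour_faces as (F0 & F1 & F2 & F3 & F4 & F5).
  destruct m as [|[|[|m]]]; try lia; [exists j, aj | exists i, (1 - b) | exists j, (1 - aj)];
    (split; [split; [assumption|]; unfold is_bit in *; lra|]); split; assumption.
Qed.

Lemma detour_segpt_not_vertex m t : (m < 3)%nat -> 0 <= t <= 1 -> (m = 0%nat -> 0 < t) ->
  (m = 2%nat -> t < 1) ->
  ~ is_vertex (segpt (detour i j b aj ak m) (detour i j b aj ak (S m)) t).
Proof.
  intros Hm Ht H0 H2; pose proof Hp as (_ & _ & Hk3 & _).
  apply (not_vertex_of_coord _ k Hk3).
  rewrite coord_segpt, !detour_coord_k by lia; rewrite S_INR.
  destruct m as [|[|[|m]]]; try lia; simpl INR;
    [pose proof (H0 eq_refl) | | pose proof (H2 eq_refl)];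
    destruct Hak as [-> | ->]; lra.
Qed.

Lemma detour_direction_k m : (m < 3)%nat ->
  coord (vsub (detour i j b aj ak (S m)) (detour i j b aj ak m)) k
    / norm (vsub (detour i j b aj ak (S m)) (detour i j b aj ak m))
  = (1 - 2 * ak) / 3 / sqrt (10 / 9).
Proof.
  intros Hm; fold (pdist (detour i j b aj ak m) (detour i j b aj ak (S m))).
  rewrite detour_pdist, coord_vsub, !detour_coord_k, S_INR by lia; f_equal; field.
Qed.

Lemma detour_straight m : (0 < m < 3)%nat ->
  straight_at (detour i j b aj ak (pred m)) (detour i j b aj ak m) (detour i j b aj ak (S m)).
Proof.
  intros Hm; pose proof Hp as (Hi3 & Hj3 & Hk3 & Hij & _).
  pose proof detour_faces as (F0 & F1 & F2 & F3 & F4 & F5).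
  assert (Hdir : forall m', (m' < 3)%nat -> m' <> i -> m' <> j ->
    coord (vsub (detour i j b aj ak (S (pred m))) (detour i j b aj ak (pred m))) m'
      / norm (vsub (detour i j b aj ak (S (pred m))) (detour i j b aj ak (pred m)))
    = coord (vsub (detour i j b aj ak (S m)) (detour i j b aj ak m)) m'
      / norm (vsub (detour i j b aj ak (S m)) (detour i j b aj ak m))).
  { intros m' Hm' Hi' Hj'.
    replace m' with k by (pose proof (perm3_cases i j k m' Hp Hm'); lia).
    rewrite !detour_direction_k by lia; reflexivity. }
  destruct m as [|[|[|m]]]; try lia; simpl pred in *;
    [exists j, aj, i, (1 - b) | exists i, (1 - b), j, (1 - aj)];
    (split; [split; [assumption|]; unfold is_bit in *; lra|]);
    (split; [split; [assumption|]; unfold is_bit in *; lra|]);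
    do 4 (split; [assumption|]); right; split; auto.
Qed.

Lemma detour_traj :
  geodesic_traj (pt_axes i j b aj ak) (pt_axes i j b (1 - aj) (1 - ak)) 3 (detour i j b aj ak).
Proof.
  pose proof Hp as (_ & _ & Hk3 & _).
  split; [lia|]; split; [reflexivity|]; split; [reflexivity|]; split; [|split; [|split]].
  - intros m Hm; split; [|apply detour_segment_face; assumption].
    intros E; pose proof (detour_pdist m Hm) as D; rewrite E, pdist_refl in D.
    pose proof (sqrt_lt_R0 (10 / 9) ltac:(lra)); lra.
  - intros m Hm; apply (not_vertex_of_coord _ k Hk3); rewrite detour_coord_k by lia.
    destruct m as [|[|[|m]]]; try lia; simpl INR; destruct Hak as [-> | ->]; lra.
  - intros m t Hm Ht; apply (detour_segpt_not_vertex m t); [assumption | lra | intros; lra..].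
  - apply detour_straight.
Qed.

Lemma detour_leaves_segment :
  leaves_segment (pt_axes i j b aj ak) (pt_axes i j b (1 - aj) (1 - ak)) 3 (detour i j b aj ak).
Proof.
  exists 1%nat; split; [lia|]; intros (t & _ & E).
  apply (f_equal (fun x => coord x i)) in E; rewrite coord_vadd, coord_vscale, coord_vsub in E.
  cbn [detour] in E; rewrite !(coord_pt_axes1 i j k) in E by exact Hp.
  destruct Hb as [-> | ->]; lra.
Qed.

Lemma detour_path_len : path_len (detour i j b aj ak) 3 = sqrt 10.
Proof.
  rewrite !path_len_S, !detour_pdist by lia; simpl path_len.
  replace (sqrt 10) with (sqrt (3 * 3 * (10 / 9))) by (f_equal; field).
  rewrite sqrt_mult, sqrt_square by lra; ring.
Qed.
End Detour.

Theorem lemma5p4 (A B : pt) :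
  opposite_on_face A B ->
  (* the face diagonal is a geodesic trajectory of length sqrt 2 *)
  (geodesic_traj A B 1 (fun k => match k with O => A | _ => B end) /\
   pdist A B = sqrt 2) /\
  (* and it is the shortest one *)
  (forall n p, geodesic_traj A B n p -> sqrt 2 <= path_len p n) /\
  (* among all other geodesic trajectories the minimal length is sqrt 10 *)
  (exists n p, geodesic_traj A B n p /\ leaves_segment A B n p /\
     path_len p n = sqrt 10) /\
  (forall n p, geodesic_traj A B n p -> leaves_segment A B n p ->
     sqrt 10 <= path_len p n).
Proof.
  intros Ho; pose proof (opposite_pdist A B Ho) as Hd.
  split; [split; [apply diagonal_traj|]; assumption|].
  split; [intros n p Hg; rewrite <- Hd; apply (traj_len_ge_pdist A B n p Hg)|].
  split; [|intros n p; apply traj_len_ge_sqrt10; assumption].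
  destruct (opposite_on_face_pt_axes A B Ho)
    as (i & j & k & b & aj & ak & Hp & Hb & Haj & Hak & -> & ->).
  exists 3%nat, (detour i j b aj ak).
  split; [|split]; [apply (detour_traj i j k) | apply (detour_leaves_segment i j k)
                   | apply (detour_path_len i j k)]; assumption.
Qed.
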